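(* Let $d,d'\in\mathcal D$ be two deterministic stationary policies, and write $(\mathbf P,\mathbf r,\boldsymbol\pi,J_\mu,J_{\mu,\sigma},\mathbf g)$ for the quantities $(\mathbf P^d,\mathbf r^d,\boldsymbol\pi^d,J^d_\mu,J^d_{\mu,\sigma},\mathbf g^d)$ of $d$ and $(\mathbf P',\mathbf r',\boldsymbol\pi',J'_\mu,J'_{\mu,\sigma})$ for those of $d'$. Then $$J'_{\mu,\sigma}-J_{\mu,\sigma}=\boldsymbol\pi'\Big[(\mathbf P'-\mathbf P)\mathbf g+\mathbf r'-\beta(\mathbf r'-J_\mu\mathbf 1)^2_\odot-\mathbf r+\beta(\mathbf r-J_\mu\mathbf 1)^2_\odot\Big]+\beta\,(J'_\mu-J_\mu)^2 .$$
   Context: Let $\mathcal S=\{1,\dots,S\}$ be a finite state space and $\mathcal A$ a finite action set. For $i,j\in\mathcal S$, $a\in\mathcal A$, let $p^a(i,j)\ge 0$ with $\sum_{j}p^a(i,j)=1$ be transition probabilities and $r(i,a)\in\mathbb R$ rewards. A deterministic stationary policy is a map $d:\mathcal S\to\mathcal A$; $\mathcal D$ denotes the (finite) set of such policies. Under $d$, $\mathbf P^d$ is the $S\times S$ matrix with entries $p^{d(i)}(i,j)$ and $\mathbf r^d$ is the column vector with entries $r(i,d(i))$. Standing assumption: for every $d\in\mathcal D$ the Markov chain with transition matrix $\mathbf P^d$ is irreducible, so it has a unique stationary distribution, the row vector $\boldsymbol\pi^d$ with $\boldsymbol\pi^d\mathbf P^d=\boldsymbol\pi^d$, $\boldsymbol\pi^d\mathbf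 1=1$, all of whose entries are strictly positive ($\mathbf 1$ is the all-ones column vector). Define the long-run mean $J^d_\mu=\boldsymbol\pi^d\mathbf r^d$, the steady-state variance $J^d_\sigma=\sum_i\pi^d(i)(r(i,d(i))-J^d_\mu)^2$, and, for a fixed weight $\beta>0$, the mean-variance combined metric $J^d_{\mu,\sigma}=J^d_\mu-\beta J^d_\sigma=\boldsymbol\pi^d\mathbf f^d$, where $f^d(i)=r(i,d(i))-\beta(r(i,d(i))-J^d_\mu)^2$. The performance potential $\mathbf g^d$ is any column vector solving the Poisson equation $\mathbf g^d=\mathbf f^d-J^d_{\mu,\sigma}\mathbf 1+\mathbf P^d\mathbf g^d$ (solutions exist and are unique up to adding a constant multiple of $\mathbf 1$). For a vector $\mathbf v$, $(\mathbf v)^2_\odot$ denotes its componentwise square. *)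

From mathcomp Require Import all_boot all_order all_algebra.
Set Implicit Arguments. Unset Strict Implicit. Unset Printing Implicit Defensive.
Import Order.TTheory GRing.Theory Num.Theory.
Local Open Scope ring_scope.

Section MDP.
Variables (R : realFieldType) (S : nat) (A : finType).

Definition Pmat (p : 'I_S -> A -> 'I_S -> R) (d : 'I_S -> A) : 'M[R]_S :=
  \matrix_(i, j) p i (d i) j.
Definition rvec (r : 'I_S -> A -> R) (d : 'I_S -> A) : 'cV[R]_S :=
  \col_i r i (d i).

Definition irreducible (P : 'M[R]_S) : Prop :=
  forall i j : 'I_S, exists k : nat, 0 < (P ^+ k) i j.

Definition stationary (P : 'M[R]_S) (pi : 'rV[R]_S) : Prop :=
  pi *m P = pi /\ \sum_i pi 0 i = 1.

Definition sqv (v : 'cV[R]_S) : 'cV[R]_S := \col_i (v i 0) ^+ 2.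

Definition Jmu (pi : 'rV[R]_S) (rv : 'cV[R]_S) : R := (pi *m rv) 0 0.
Definition Jsigma (pi : 'rV[R]_S) (rv : 'cV[R]_S) : R :=
  \sum_i pi 0 i * (rv i 0 - Jmu pi rv) ^+ 2.
Definition Jms (beta : R) (pi : 'rV[R]_S) (rv : 'cV[R]_S) : R :=
  Jmu pi rv - beta * Jsigma pi rv.
Definition fvec (beta : R) (pi : 'rV[R]_S) (rv : 'cV[R]_S) : 'cV[R]_S :=
  \col_i (rv i 0 - beta * (rv i 0 - Jmu pi rv) ^+ 2).

Definition poisson (beta : R) (P : 'M[R]_S) (pi : 'rV[R]_S) (rv : 'cV[R]_S)
  (g : 'cV[R]_S) : Prop :=
  g = fvec beta pi rv - Jms beta pi rv *: const_mx 1 + P *m g.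
End MDP.

From mathcomp Require Import all_boot all_order all_algebra.
From mathcomp Require Import ring.
Set Implicit Arguments. Unset Strict Implicit. Unset Printing Implicit Defensive.
Import Order.TTheory GRing.Theory Num.Theory.
Local Open Scope ring_scope.

(* Two facts drive the proof.
   - Performance difference: if pi' is stationary for P' and g solves the
     Poisson equation g = f - c 1 + P g, then pi' (P' - P) g = pi' f - c,
     because pi' P' g = pi' g.  Applied to f = r - beta (r - J_mu 1)^2 and
     c = J_{mu,sigma}, this rewrites pi' (P' - P) g.
   - Mean shift of squared deviations: for weights w summing to one and
     mean m = sum_i w_i x_i, sum_i w_i (x_i - c)^2 = sum_i w_i (x_i - m)^2
     + (m - c)^2.  With w = pi', x = r', c = J_mu this expresses
     pi' (r' - J_mu 1)^2 as J'_sigma + (J'_mu - J_mu)^2.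
   Both are proved for arbitrary commutative rings and dimensions; the
   theorem then follows by expanding the right-hand side linearly. *)

Lemma mulmx_const1 (R : comPzRingType) (n : nat) (w : 'rV[R]_n) :
  w *m const_mx 1 = (\sum_i w 0 i)%:M.
Proof.
apply/matrixP => i j; rewrite [i]ord1 [j]ord1 !mxE mulr1n.
by apply: eq_bigr => k _; rewrite mxE mulr1.
Qed.

(* The functional v |-> (w v)_00 is linear; stated entrywise so that the
   products w *m v stay folded while a combination is expanded. *)
Section RowFunctional.
Variables (R : comPzRingType) (n : nat) (w : 'rV[R]_n).

Lemma row_entryD (u v : 'cV[R]_n) :
  (w *m (u + v)) 0 0 = (w *m u) 0 0 + (w *m v) 0 0.
Proof. by rewrite mulmxDr mxE. Qed.

Lemma row_entryB (u v : 'cV[R]_n) :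
  (w *m (u - v)) 0 0 = (w *m u) 0 0 - (w *m v) 0 0.
Proof. by rewrite mulmxBr !mxE. Qed.

Lemma row_entryZ (a : R) (v : 'cV[R]_n) :
  (w *m (a *: v)) 0 0 = a * (w *m v) 0 0.
Proof. by rewrite -scalemxAr mxE. Qed.

End RowFunctional.

Lemma performance_difference (R : comPzRingType) (n : nat)
    (P P' : 'M[R]_n) (pi' : 'rV[R]_n) (f g : 'cV[R]_n) (c : R) :
  pi' *m P' = pi' -> \sum_i pi' 0 i = 1 ->
  g = f - c *: const_mx 1 + P *m g ->
  (pi' *m ((P' - P) *m g)) 0 0 = (pi' *m f) 0 0 - c.
Proof.
move=> stat sum1 poisson_g.
have Pg : P *m g = g - f + c *: const_mx 1.
  by rewrite [in RHS]poisson_g -(addrA f) (addrC f) addrK (addrC (- _)) subrK.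
rewrite mulmxBl mulmxBr mulmxA stat Pg.
rewrite !(mulmxDr, mulmxBr, mulmxN) -scalemxAr mulmx_const1 sum1.
by rewrite !mxE mulr1n mulr1; ring.
Qed.

Lemma weighted_sq_shift (R : comPzRingType) (n : nat) (w x : 'I_n -> R) (c : R) :
  \sum_i w i = 1 ->
  let m := \sum_i w i * x i in
  \sum_i w i * (x i - c) ^+ 2 = \sum_i w i * (x i - m) ^+ 2 + (m - c) ^+ 2.
Proof.
move=> sum1 m.
have centered : \sum_i w i * (x i - m) = 0.
  under eq_bigr => i _ do rewrite mulrBr.
  by rewrite sumrB -mulr_suml sum1 mul1r subrr.
transitivity (\sum_i (w i * (x i - m) ^+ 2 + w i * (x i - m) * (2 * (m - c))
                     + w i * (m - c) ^+ 2)).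
  by apply: eq_bigr => i _; ring.
by rewrite !big_split /= -!mulr_suml centered sum1 mul0r addr0 mul1r.
Qed.

Section MeanVariance.
Variables (R : realFieldType) (S : nat).
Implicit Types (pi : 'rV[R]_S) (rv : 'cV[R]_S).

Lemma fvec_sqv (beta : R) pi rv :
  fvec beta pi rv = rv - beta *: sqv (rv - Jmu pi rv *: const_mx 1).
Proof. by apply/matrixP => i j; rewrite !mxE [j]ord1 mulr1. Qed.

Lemma Jmu_sqv_shift pi rv (c : R) :
  \sum_i pi 0 i = 1 ->
  (pi *m sqv (rv - c *: const_mx 1)) 0 0
    = Jsigma pi rv + (Jmu pi rv - c) ^+ 2.
Proof.
move=> sum1; have JmuE : Jmu pi rv = \sum_i pi 0 i * rv i 0 by rewrite /Jmu mxE.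
rewrite /Jsigma JmuE -(weighted_sq_shift (fun i => rv i 0) c sum1) mxE.
by apply: eq_bigr => i _; rewrite !mxE mulr1.
Qed.

End MeanVariance.

Theorem lemma1 (R : realFieldType) (S : nat) (A : finType)
  (p : 'I_S -> A -> 'I_S -> R) (r : 'I_S -> A -> R) (beta : R)
  (p_ge0 : forall i a j, 0 <= p i a j)
  (p_sum1 : forall i a, \sum_j p i a j = 1)
  (irr : forall d : 'I_S -> A, irreducible (Pmat p d))
  (beta_gt0 : 0 < beta)
  (d d' : 'I_S -> A) (pi pi' : 'rV[R]_S)
  (pi_st : stationary (Pmat p d) pi) (pi'_st : stationary (Pmat p d') pi')
  (pi_pos : forall i, 0 < pi 0 i) (pi'_pos : forall i, 0 < pi' 0 i)
  (g : 'cV[R]_S) (g_poisson : poisson beta (Pmat p d) pi (rvec r d) g) :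
  Jms beta pi' (rvec r d') - Jms beta pi (rvec r d) =
    (pi' *m ((Pmat p d' - Pmat p d) *m g + rvec r d'
             - beta *: sqv (rvec r d' - Jmu pi (rvec r d) *: const_mx 1)
             - rvec r d
             + beta *: sqv (rvec r d - Jmu pi (rvec r d) *: const_mx 1))) 0 0
    + beta * (Jmu pi' (rvec r d') - Jmu pi (rvec r d)) ^+ 2.
Proof.
case: pi'_st => stat' sum1'.
set J := Jmu pi (rvec r d).
have gap := performance_difference stat' sum1' g_poisson.
rewrite fvec_sqv row_entryB row_entryZ -/J in gap.
have shift' := Jmu_sqv_shift (rvec r d') J sum1'.
rewrite !(row_entryB, row_entryD, row_entryZ) gap shift'.
rewrite -/(Jmu pi' (rvec r d')) /Jms; ring.
Qed.
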